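(* Every closed quantifier $Q\subseteq 2^{\mathbb{N}^k}$ has a unique support, i.e. there is a unique $\subseteq$-minimal set $S\subseteq\mathbb{N}^k$ supporting $Q$.
   Context: A quantifier of type $\langle k\rangle$ on $\mathbb{N}$ is a family $Q$ of subsets of $\mathbb{N}^k$, identified with a subset of $2^{\mathbb{N}^k}$ (product topology). A set $S\subseteq\mathbb{N}^k$ supports $Q$ if for all $A,B\subseteq\mathbb{N}^k$ with $A\cap S=B\cap S$ we have $A\in Q\iff B\in Q$. A support of $Q$ is a minimal (under inclusion) set supporting $Q$. *)

From mathcomp Require Import all_boot.
Set Implicit Arguments. Unset Strict Implicit. Unset Printing Implicit Defensive.

Definition point (k : nat) := k.-tuple nat.
Definition subset_Nk (k : nat) := point k -> bool.

Definition quantifier (k : nat) := subset_Nk k -> Prop.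

(* Closedness in the product topology on 2^(N^k): the complement is open,
   i.e. every A outside Q has a basic (cylinder) neighbourhood, determined by
   finitely many coordinates F, disjoint from Q. *)
Definition is_open_set (k : nat) (U : quantifier k) : Prop :=
  forall A : subset_Nk k, U A ->
    exists F : seq (point k),
      forall B : subset_Nk k, (forall x, x \in F -> B x = A x) -> U B.

Definition is_closed (k : nat) (Q : quantifier k) : Prop :=
  is_open_set (fun A => ~ Q A).

Definition supports (k : nat) (Q : quantifier k) (S : subset_Nk k) : Prop :=
  forall A B : subset_Nk k, (forall x, S x -> A x = B x) -> (Q A <-> Q B).

Definition is_support (k : nat) (Q : quantifier k) (S : subset_Nk k) : Prop :=
  supports Q S /\
  forall S' : subset_Nk k, supports Q S' ->
    (forall x, S' x -> S x) -> (forall x, S x -> S' x).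

From mathcomp Require Import all_boot.
From Stdlib Require Import Classical ClassicalEpsilon FunctionalExtensionality.
Set Implicit Arguments. Unset Strict Implicit.

(* The support is the set of essential points: those x at which toggling the
   value of some member of Q leaves Q. Every supporting set must contain each
   essential point. Conversely, if A and B agree on the essential points and
   A ∈ Q but B ∉ Q, closedness gives finitely many coordinates F such that
   everything agreeing with B on F lies outside Q; changing A into B one
   inessential point of F at a time never leaves Q, a contradiction. Hence the
   essential points form the least supporting set, which is the unique
   minimal one. *)

Section EssentialPoints.

Variables (k : nat) (Q : quantifier k).

Definition toggle (x : point k) (A : subset_Nk k) : subset_Nk k :=
  fun y => if y == x then ~~ A y else A y.

Definition patch (L : seq (point k)) (B A : subset_Nk k) : subset_Nk k :=
  fun y => if y \in L then B y else A y.

Definition essential (x : point k) : Prop :=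
  exists A, Q A /\ ~ Q (toggle x A).

Definition essential_set : subset_Nk k :=
  fun x => if excluded_middle_informative (essential x) then true else false.

Lemma essential_setP x : essential_set x <-> essential x.
Proof. by rewrite /essential_set; case: excluded_middle_informative. Qed.

Lemma toggle_inessential x A : ~ essential x -> Q A -> Q (toggle x A).
Proof. by move=> nex QA; apply: NNPP => nQ; apply: nex; exists A. Qed.

Lemma supports_essential S x : supports Q S -> essential x -> S x.
Proof.
move=> supS [A [QA nQ]]; apply: NNPP => nSx; apply: nQ.
apply/(supS A) => // y Sy; rewrite /toggle; case: eqP => // eyx.
by rewrite eyx in Sy.
Qed.

Lemma patch_inessential L B A :
  (forall x, x \in L -> ~ essential x) -> Q A -> Q (patch L B A).
Proof.
elim: L => [//|x L IH] nexL QA.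
have QLA : Q (patch L B A) by apply: IH => // y yL; apply: nexL; rewrite inE yL orbT.
have nex : ~ essential x by apply: nexL; rewrite inE eqxx.
case: (boolP (B x == patch L B A x)) => [/eqP BxE | BxN].
  suff -> : patch (x :: L) B A = patch L B A by [].
  by apply: functional_extensionality => y; rewrite /patch inE; case: eqP => [->|].
suff -> : patch (x :: L) B A = toggle x (patch L B A) by exact: toggle_inessential.
apply: functional_extensionality => y; rewrite /toggle /patch inE.
case: eqP => [->|//]; move: BxN; rewrite /patch.
by case: (x \in L); case: (B x); case: (A x).
Qed.

Lemma closed_supports_essential : is_closed Q -> supports Q essential_set.
Proof.
move=> clQ.
suff QAB : forall A B, (forall x, essential_set x -> A x = B x) -> Q A -> Q B.
  by move=> A B eqAB; split; apply: QAB => // x /eqAB.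
move=> A B eqAB QA; apply: NNPP => nQB.
have [F nQF] := clQ B nQB.
pose L := filter (fun y => ~~ essential_set y) F.
apply: (nQF (patch L B A)).
  move=> x xF; rewrite /patch mem_filter xF andbT.
  by case: (boolP (essential_set x)) => //= /eqAB.
apply: patch_inessential => // x; rewrite mem_filter => /andP [/negP nex _].
by move/essential_setP.
Qed.

End EssentialPoints.

Lemma least_supporting_unique (k : nat) (Q : quantifier k) (S0 : subset_Nk k) :
  supports Q S0 -> (forall S, supports Q S -> forall x, S0 x -> S x) ->
  exists! S : subset_Nk k, is_support Q S.
Proof.
move=> supS0 leastS0; exists S0; split.
  by split=> // S supS _; exact: leastS0.
move=> S [supS minS]; apply: functional_extensionality => x.
have S0_sub_S := leastS0 S supS.
by apply/idP/idP; [exact: S0_sub_S | exact: minS].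
Qed.

Theorem lemma16 (k : nat) (Q : quantifier k) :
  is_closed Q -> exists! S : subset_Nk k, is_support Q S.
Proof.
move=> clQ; apply: (least_supporting_unique (closed_supports_essential clQ)).
by move=> S supS x /essential_setP; exact: supports_essential.
Qed.
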